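(* Let $(A,\mathcal H)$ be a commutative Hopf algebroid such that $\mathcal H$ is flat as an $A$-module via $s$, and let $\mathcal K\subseteq\mathcal H$ be a sub-Hopf algebroid over the same base $A$ such that $\mathcal H$ is pure over $\mathcal K$. Then $\mathcal H\mathcal K^+$ is a normal Hopf ideal of $\mathcal H$ and $\mathcal H$ is pure over $\mathcal H^{\mathrm{co}\,\mathcal H/\mathcal H\mathcal K^+}$.
   Context: A commutative Hopf algebroid $(A,\mathcal H)$ over a field $\Bbbk$: commutative $\Bbbk$-algebras $A,\mathcal H$ with algebra maps $s,t:A\to\mathcal H$, $\varepsilon:\mathcal H\to A$, $\Delta:\mathcal H\to\mathcal H\otimes_A\mathcal H$ (left factor an $A$-module via $t$, right via $s$), $\mathcal S:\mathcal H\to\mathcal H$ such that $(\mathcal H,\Delta,\varepsilon)$ is a coassociative counital $A$-coring, $\mathcal Ss=t$, $\mathcal St=s$, $\mathcal S^2=\mathrm{id}$, $\sum\mathcal S(u_1)u_2=t\varepsilon(u)$, $\sum u_1\mathcal S(u_2)=s\varepsilon(u)$ ($\Delta(u)=\sum u_1\otimes_Au_2$). $\mathcal K^+=\mathcal K\cap\ker\varepsilon$. A sub-Hopf algebroid $\mathcal K$: subalgebra containing $s(A),t(A)$, stable under $\mathcal S$, with $\Delta(\mathcal K)\subseteq\mathcal K\otimes_A\mathcal K$. A Hopf ideal: ideal $I$ with $\varepsilon(I)=0$, $\Delta(I)\subseteq$ image of $\mathcal H\otimes_AI+I\otimes_A\mathcal H$, $\mathcal S(I)\subseteq I$. With $\langle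 s-t\rangle$ the ideal generated by all $s(a)-t(a)$, $\overline{\mathcal H}=\mathcal H/\langle s-t\rangle$ (classes $\bar x$, an $A$-algebra via $\overline{s(a)}$), a Hopf ideal $I$ is normal if $\langle s-t\rangle\subseteq I$ and for every $x\in I$, $\sum\overline{x_2}\otimes_A\mathcal S(x_1)x_3\in\overline{\mathcal H}\otimes_A\mathcal H$ lies in the image of $(I/\langle s-t\rangle)\otimes_A\mathcal H$. $\mathcal H^{\mathrm{co}\,\mathcal H/I}=\{x:\sum\pi(x_1)\otimes_Ax_2=\pi(1)\otimes_Ax\}$ with $\pi:\mathcal H\to\mathcal H/I$. ''Pure over $B$'': inclusion $B\to\mathcal H$ is a pure morphism of $B$-modules. *)

(* Commutative Hopf algebroids over a field, with tensor
   products over a base ring represented by (Sweedler) lists of pure tensors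
   modulo the relations presenting the tensor product. *)
From HB Require Import structures.
From mathcomp Require Import all_boot all_order all_algebra.
Set Implicit Arguments. Unset Strict Implicit. Unset Printing Implicit Defensive.
Import GRing.Theory.
Local Open Scope ring_scope.

(* An element of the tensor product is represented by a finite list of pure
   tensors  [:: (m1,n1); ...]  (meaning  m1 (x) n1 + ...).
   - [dom] : the scalars that are balanced over (the base ring, possibly a
     subring given by a predicate),
   - [actM] : right action of scalars on the left factor,
   - [actN] : left action of scalars on the right factor,
   - [eqM]  : the equality of the left factor (to allow quotient modules M/J:
     eqM m m' := (m - m') \in J; use (@eq M) for M itself).
   [tens_eq] is the congruence on the free commutative monoid on M*N generated
   by the defining relations of the tensor product; the quotient is exactly
   (M/~) (x)_B N. *)
Section Tensor.
Variables (Sc : Type) (dom : Sc -> Prop) (M N : zmodType)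
  (actM : Sc -> M -> M) (actN : Sc -> N -> N) (eqM : M -> M -> Prop).

Inductive tens_eq : seq (M * N) -> seq (M * N) -> Prop :=
| te_refl l : tens_eq l l
| te_sym l l' : tens_eq l l' -> tens_eq l' l
| te_trans l1 l2 l3 : tens_eq l1 l2 -> tens_eq l2 l3 -> tens_eq l1 l3
| te_perm l l' : perm_eq l l' -> tens_eq l l'
| te_cat l1 l2 l1' l2' :
    tens_eq l1 l1' -> tens_eq l2 l2' -> tens_eq (l1 ++ l2) (l1' ++ l2')
| te_addl m m' n : tens_eq [:: (m + m', n)] [:: (m, n); (m', n)]
| te_addr m n n' : tens_eq [:: (m, n + n')] [:: (m, n); (m, n')]
| te_zero n : tens_eq [:: (0, n)] [::]
| te_bal a m n : dom a -> tens_eq [:: (actM a m, n)] [:: (m, actN a n)]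
| te_eqM m m' n : eqM m m' -> tens_eq [:: (m, n)] [:: (m', n)].
End Tensor.

(* Triple tensor product  H (x)_A H (x)_A H  (left factors via t on the right,
   right factors via s on the left). *)
Section Tensor3.
Variables (A H : comNzRingType) (s t : A -> H).

Inductive tens3_eq : seq (H * H * H) -> seq (H * H * H) -> Prop :=
| t3_refl l : tens3_eq l l
| t3_sym l l' : tens3_eq l l' -> tens3_eq l' l
| t3_trans l1 l2 l3 : tens3_eq l1 l2 -> tens3_eq l2 l3 -> tens3_eq l1 l3
| t3_perm l l' : perm_eq l l' -> tens3_eq l l'
| t3_cat l1 l2 l1' l2' :
    tens3_eq l1 l1' -> tens3_eq l2 l2' -> tens3_eq (l1 ++ l2) (l1' ++ l2')
| t3_add1 x x' y z : tens3_eq [:: (x + x', y, z)] [:: (x, y, z); (x', y, z)]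
| t3_add2 x y y' z : tens3_eq [:: (x, y + y', z)] [:: (x, y, z); (x, y', z)]
| t3_add3 x y z z' : tens3_eq [:: (x, y, z + z')] [:: (x, y, z); (x, y, z')]
| t3_zero y z : tens3_eq [:: (0, y, z)] [::]
| t3_bal1 a x y z : tens3_eq [:: (x * t a, y, z)] [:: (x, s a * y, z)]
| t3_bal2 a x y z : tens3_eq [:: (x, y * t a, z)] [:: (x, y, s a * z)].
End Tensor3.

Section HopfAlgebroid.
Variables (k : fieldType) (A H : comAlgType k).
Variables (s t : {lrmorphism A -> H}) (eps : {lrmorphism H -> A})
  (Delta : H -> seq (H * H)) (S : {lrmorphism H -> H}).

Definition hteq := tens_eq (fun _ : A => True)
  (fun a (x : H) => x * t a) (fun a (y : H) => s a * y) (@eq H).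

Definition hopf_algebroid : Prop :=
  ((forall x y, hteq (Delta (x + y)) (Delta x ++ Delta y)) /\
   (forall (c : k) x,
       hteq (Delta (c *: x)) [seq (c *: p.1, p.2) | p <- Delta x]) /\
   hteq (Delta 1) [:: (1, 1)] /\
   (forall x y, hteq (Delta (x * y))
      [seq (p.1 * q.1, p.2 * q.2) | p <- Delta x, q <- Delta y])) /\
  ((forall a x, hteq (Delta (s a * x)) [seq (s a * p.1, p.2) | p <- Delta x]) /\
   (forall a x, hteq (Delta (x * t a)) [seq (p.1, p.2 * t a) | p <- Delta x]) /\
   (forall a, eps (s a) = a) /\ (forall a, eps (t a) = a) /\
   (forall x, tens3_eq s t
      [seq (q.1, q.2, p.2) | p <- Delta x, q <- Delta p.1]
      [seq (p.1, q.1, q.2) | p <- Delta x, q <- Delta p.2]) /\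
   (forall x, \sum_(p <- Delta x) s (eps p.1) * p.2 = x) /\
   (forall x, \sum_(p <- Delta x) p.1 * t (eps p.2) = x)) /\
  ((forall a, S (s a) = t a) /\ (forall a, S (t a) = s a) /\
   (forall x, S (S x) = x) /\
   (forall x, \sum_(p <- Delta x) S p.1 * p.2 = t (eps x)) /\
   (forall x, \sum_(p <- Delta x) p.1 * S p.2 = s (eps x))).

Definition is_ideal (I : H -> Prop) : Prop :=
  [/\ I 0, (forall x y, I x -> I y -> I (x + y)) &
      (forall h x, I x -> I (h * x))].

Definition ideal_gen (X : H -> Prop) (x : H) : Prop :=
  exists l : seq (H * H),
    (forall p, p \in l -> X p.2) /\ x = \sum_(p <- l) p.1 * p.2.

Definition st_ideal : H -> Prop :=
  ideal_gen (fun y => exists a, y = s a - t a).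

Definition HKplus (K : H -> Prop) : H -> Prop :=
  ideal_gen (fun y => K y /\ eps y = 0).

Definition hopf_ideal (I : H -> Prop) : Prop :=
  [/\ is_ideal I, (forall x, I x -> eps x = 0),
      (forall x, I x -> exists l : seq (H * H),
          (forall p, p \in l -> I p.1 \/ I p.2) /\ hteq l (Delta x)) &
      (forall x, I x -> I (S x))].

(* equality in  Hbar (x)_A H,  Hbar = H / <s - t>  (an A-algebra via sbar) *)
Definition barteq := tens_eq (fun _ : A => True)
  (fun a (x : H) => x * s a) (fun a (y : H) => s a * y)
  (fun x y => st_ideal (x - y)).

Definition normal_hopf_ideal (I : H -> Prop) : Prop :=
  [/\ hopf_ideal I, (forall x, st_ideal x -> I x) &
      forall x, I x -> exists l : seq (H * H),
        (* an element of the image of (I/<s-t>) (x)_A H in Hbar (x)_A H *)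
        (forall p, p \in l -> I p.1) /\
        barteq l [seq (q.2, S q.1 * p.2) | p <- Delta x, q <- Delta p.1]].

Definition coinv (I : H -> Prop) (x : H) : Prop :=
  tens_eq (fun _ : A => True) (fun a (y : H) => y * t a)
    (fun a (z : H) => s a * z) (fun y z => I (y - z))
    (Delta x) [:: (1, x)].

Definition sub_hopf_algebroid (K : H -> Prop) : Prop :=
  [/\ (forall a, K (s a) /\ K (t a)),
      (forall x y, K x -> K y -> K (x + y)), (forall x, K x -> K (- x)),
      (forall x y, K x -> K y -> K (x * y)) &
   [/\ (forall (c : k) x, K x -> K (c *: x)),
      (forall x, K x -> K (S x)) &
      (forall x, K x -> exists l : seq (H * H),
          (forall p, p \in l -> K p.1 /\ K p.2) /\ hteq l (Delta x))]].

(* M is a module over the subring B of H (action only constrained on B) *)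
Definition module_over (R : ringType) (B : R -> Prop) (M : zmodType)
  (act : R -> M -> M) : Prop :=
  [/\ (forall b m m', B b -> act b (m + m') = act b m + act b m'),
      (forall b b' m, B b -> B b' -> act (b + b') m = act b m + act b' m),
      (forall b b' m, B b -> B b' -> act (b * b') m = act b (act b' m)) &
      (forall m, act 1 m = m)].

(* H is pure over the subring B:  for every B-module M, the canonical map
   M = M (x)_B B -> M (x)_B H,  m |-> m (x) 1,  is injective. *)
Definition pure_over (B : H -> Prop) : Prop :=
  forall (M : zmodType) (act : H -> M -> M), module_over B act ->
  forall m m' : M,
    tens_eq B act (fun b (h : H) => b * h) (@eq M) [:: (m, 1)] [:: (m', 1)] ->
    m = m'.

Definition flat_via_s : Prop :=
  forall (M M' : zmodType) (actM : A -> M -> M) (actM' : A -> M' -> M'),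
  module_over (fun _ => True) actM -> module_over (fun _ => True) actM' ->
  forall f : {additive M -> M'},
  (forall a m, f (actM a m) = actM' a (f m)) -> injective f ->
  forall l l' : seq (M * H),
    tens_eq (fun _ : A => True) actM' (fun a (h : H) => s a * h) (@eq M')
      [seq (f p.1, p.2) | p <- l] [seq (f p.1, p.2) | p <- l'] ->
    tens_eq (fun _ : A => True) actM (fun a (h : H) => s a * h) (@eq M) l l'.

End HopfAlgebroid.

(* Write K^+ for K ∩ ker ε and I = H K^+.  For y ∈ K^+, Δy is represented by
   pure tensors Σ v₁ ⊗ v₂ with legs in K, and splitting each right leg as
   (v₂ - s ε v₂) + s ε v₂ gives Δy = Σ v₁ ⊗ (v₂ - s ε v₂) + y ⊗ 1, which lies in
   H ⊗ I + I ⊗ H.  The same splitting of the legs of Δ(y₁) shows that the adjoint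
   coaction x ↦ x₂ ⊗ S(x₁) x₃ sends y into I ⊗ H modulo ⟨s - t⟩, the leftover
   term being 1 ⊗ S(y₁) y₂ = 1 ⊗ t ε y = 0.  Since Δ and the adjoint coaction
   are multiplicative, both properties pass to I, a normal Hopf ideal.

   The coinvariants of H/I are exactly K, so purity over them is the hypothesis
   itself.  Elements of K are coinvariant by the counit axiom.  Conversely, the
   map h ⊗ h' ↦ [h₁] ⊗ S(h₂) h' from (H/I) ⊗_A H to (H/K) ⊗_K H is well defined
   (it kills I ⊗ H), sends 1 ⊗ x to 0 and, by coassociativity and the antipode
   axiom, sends Δx to [x] ⊗ 1.  A coinvariant x thus has [x] ⊗ 1 = 0, and purity
   of H over K gives x ∈ K. *)

From HB Require Import structures.
From Stdlib Require Import ClassicalEpsilon FunctionalExtensionality PropExtensionality.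
From mathcomp Require Import all_boot all_algebra generic_quotient ring_quotient ring.
Set Implicit Arguments. Unset Strict Implicit. Unset Printing Implicit Defensive.
Import GRing.Theory.
Local Open Scope ring_scope.

Lemma flatten_map_flatten (T U : Type) (F : T -> seq U) (ss : seq (seq T)) :
  flatten (map F (flatten ss)) = flatten (map (fun s => flatten (map F s)) ss).
Proof. by elim: ss => //= s ss IH; rewrite map_cat flatten_cat IH. Qed.

Lemma perm_flatten_swap (T1 T2 R : eqType) (Y : T1 -> T2 -> seq R)
    (s : seq T1) (t : seq T2) :
  perm_eq (flatten [seq flatten [seq Y x y | y <- t] | x <- s])
          (flatten [seq flatten [seq Y x y | x <- s] | y <- t]).
Proof.
apply/permP => a; rewrite -!sum1_count !(big_mkcond a) !big_flatten /= !big_map.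
under eq_bigr do rewrite big_flatten /= big_map.
under [RHS]eq_bigr do rewrite big_flatten /= big_map.
by rewrite exchange_big.
Qed.

(** * Tensor products presented by generators and relations *)

#[local] Arguments te_refl {Sc dom M N actM actN eqM} l.
#[local] Arguments te_addl {Sc dom M N actM actN eqM} m m' n.
#[local] Arguments te_addr {Sc dom M N actM actN eqM} m n n'.
#[local] Arguments te_zero {Sc dom M N actM actN eqM} n.
#[local] Arguments te_perm {Sc dom M N actM actN eqM} l l'.

Definition spanned (T : eqType) (R : seq T -> seq T -> Prop) (P : T -> Prop)
    (l : seq T) :=
  exists l', (forall p, p \in l' -> P p) /\ R l' l.

Section TensorCalculus.
Variables (Sc : Type) (dom : Sc -> Prop) (M N : zmodType)
  (actM : Sc -> M -> M) (actN : Sc -> N -> N) (eqM : M -> M -> Prop).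
Local Notation TE := (tens_eq dom actM actN eqM).

Lemma te_cons x y l l' : TE [:: x] [:: y] -> TE l l' -> TE (x :: l) (y :: l').
Proof. exact: te_cat. Qed.

Lemma te_catl l l1 l2 : TE l1 l2 -> TE (l ++ l1) (l ++ l2).
Proof. exact/te_cat/te_refl. Qed.

Lemma te_catr l l1 l2 : TE l1 l2 -> TE (l1 ++ l) (l2 ++ l).
Proof. by move=> e; apply: te_cat e (te_refl _). Qed.

Lemma te_zero_r m : TE [:: (m, 0)] [::].
Proof.
have oppK : TE [:: (m, 0); (- m, 0)] [::].
  by apply: te_trans (te_sym (te_addl _ _ _)) _; rewrite subrr; apply: te_zero.
have dup : TE [:: (m, 0)] [:: (m, 0); (m, 0)].
  by rewrite -{1}[0 : N]addr0; apply: te_addr.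
apply: te_trans (te_cons (te_refl _) (te_sym oppK)) _.
exact: te_trans (te_catr [:: (- m, 0)] (te_sym dup)) oppK.
Qed.

Lemma te_sumr I (r : seq I) (F : I -> N) m :
  TE [:: (m, \sum_(i <- r) F i)] [seq (m, F i) | i <- r].
Proof.
elim: r => [|i r IH]; first by rewrite big_nil; apply: te_zero_r.
by rewrite big_cons; apply: te_trans (te_addr _ _ _) (te_cons (te_refl _) IH).
Qed.

Lemma te_suml I (r : seq I) (F : I -> M) n :
  TE [:: (\sum_(i <- r) F i, n)] [seq (F i, n) | i <- r].
Proof.
elim: r => [|i r IH]; first by rewrite big_nil; apply: te_zero.
by rewrite big_cons; apply: te_trans (te_addl _ _ _) (te_cons (te_refl _) IH).
Qed.

Lemma te_map_split I (r : seq I) (f g g' : I -> M * N) :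
  (forall i, TE [:: f i] [:: g i; g' i]) -> TE (map f r) (map g r ++ map g' r).
Proof.
move=> e; elim: r => [|i r IH] /=; first exact: te_refl.
apply: te_trans (te_cat (e i) IH) (te_perm _ _ _).
by rewrite /= perm_cons -cat1s perm_catCA.
Qed.

Lemma te_eq_flatten (I : eqType) (r : seq I) (F G : I -> seq (M * N)) :
  {in r, forall i, TE (F i) (G i)} -> TE (flatten (map F r)) (flatten (map G r)).
Proof.
elim: r => [|i r IH] e /=; first exact: te_refl.
apply: te_cat; first exact: e (mem_head _ _).
by apply: IH => j jr; apply: e; rewrite inE jr orbT.
Qed.

Lemma te_eq_map (I : eqType) (r : seq I) (f g : I -> M * N) :
  {in r, forall i, TE [:: f i] [:: g i]} -> TE (map f r) (map g r).
Proof.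
rewrite -[map f r]flatten_map1 -[map g r]flatten_map1.
exact: te_eq_flatten.
Qed.

Lemma te_flatten_nil (I : eqType) (r : seq I) (F : I -> seq (M * N)) :
  {in r, forall i, TE (F i) [::]} -> TE (flatten (map F r)) [::].
Proof.
move=> e; apply: te_trans (te_eq_flatten (G := fun=> [::]) e) _.
have -> : flatten (map (fun=> [::]) r) = [::] :> seq (M * N) by elim: r {e}.
exact: te_refl.
Qed.

Lemma te_map_nil (I : eqType) (r : seq I) (f : I -> M * N) :
  {in r, forall i, TE [:: f i] [::]} -> TE (map f r) [::].
Proof. by move=> e; rewrite -[map f r]flatten_map1; apply: te_flatten_nil. Qed.

Lemma te_balanced_sum (Z : zmodType) (f : M -> N -> Z) :
  (forall m m' n, f (m + m') n = f m n + f m' n) ->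
  (forall m n n', f m (n + n') = f m n + f m n') ->
  (forall a m n, dom a -> f (actM a m) n = f m (actN a n)) ->
  (forall m m' n, eqM m m' -> f m n = f m' n) ->
  forall l l', TE l l' -> \sum_(p <- l) f p.1 p.2 = \sum_(p <- l') f p.1 p.2.
Proof.
move=> fDl fDr fbal feq l l'; elim => {l l'}.
- by [].
- by move=> ??? ->.
- by move=> ??? _ -> _ ->.
- by move=> ???; apply: perm_big.
- by move=> ???? _ e1 _ e2; rewrite !big_cat e1 e2.
- by move=> m m' n; rewrite !big_cons !big_nil fDl !addr0.
- by move=> m n n'; rewrite !big_cons !big_nil fDr !addr0.
- move=> n; rewrite big_cons !big_nil addr0.
  by apply: (@addrI _ (f 0 n)); rewrite -fDl !addr0.
- by move=> a m n da; rewrite !big_cons !big_nil fbal.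
- by move=> m m' n e; rewrite !big_cons !big_nil (feq _ _ _ e).
Qed.

Lemma spanned_te (P : M * N -> Prop) l1 l2 :
  spanned TE P l1 -> TE l1 l2 -> spanned TE P l2.
Proof. by move=> [l [Pl e1]] e2; exists l; split => //; apply: te_trans e1 e2. Qed.

Lemma spanned_flatten (P : M * N -> Prop) (I : eqType) (r : seq I) G :
  {in r, forall i, spanned TE P (G i)} -> spanned TE P (flatten (map G r)).
Proof.
elim: r => [|i r IH] sp /=; first by exists [::]; split => //; apply: te_refl.
have [li [Pli ei]] := sp i (mem_head _ _).
have [l [Pl e]] : spanned TE P (flatten (map G r)).
  by apply: IH => j jr; apply: sp; rewrite inE jr orbT.
exists (li ++ l); split; last exact: te_cat.
by move=> p; rewrite mem_cat => /orP[]; [apply: Pli | apply: Pl].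
Qed.

Lemma te_flatten_mod (P : M * N -> Prop) (I : eqType) (r : seq I) G
    (F : I -> N) m :
  {in r, forall i, exists2 D, (forall p, p \in D -> P p) &
                              TE (G i) (D ++ [:: (m, F i)])} ->
  exists2 D, (forall p, p \in D -> P p) &
             TE (flatten (map G r)) (D ++ [:: (m, \sum_(i <- r) F i)]).
Proof.
elim: r => [|i r IH] modG /=.
  by exists [::] => //; rewrite big_nil; apply: te_sym; apply: te_zero_r.
have [Di PDi ei] := modG i (mem_head _ _).
have [D PD e] : exists2 D, (forall p, p \in D -> P p) &
    TE (flatten (map G r)) (D ++ [:: (m, \sum_(j <- r) F j)]).
  by apply: IH => j jr; apply: modG; rewrite inE jr orbT.
exists (Di ++ D).
  by move=> p; rewrite mem_cat => /orP[]; [apply: PDi | apply: PD].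
rewrite big_cons; apply: te_trans (te_cat ei e) _.
apply: te_trans (te_perm _ _ _) (te_catl _ (te_sym (te_addr _ _ _))).
by rewrite -!catA perm_cat2l -cat1s perm_catCA.
Qed.

Section Functoriality.
Variables (Sc' : Type) (dom' : Sc' -> Prop) (M' N' : zmodType)
  (actM' : Sc' -> M' -> M') (actN' : Sc' -> N' -> N') (eqM' : M' -> M' -> Prop).
Local Notation TE' := (tens_eq dom' actM' actN' eqM').

Lemma te_flatten_map (F : M * N -> seq (M' * N')) :
  (forall m m' n, TE' (F (m + m', n)) (F (m, n) ++ F (m', n))) ->
  (forall m n n', TE' (F (m, n + n')) (F (m, n) ++ F (m, n'))) ->
  (forall n, TE' (F (0, n)) [::]) ->
  (forall a m n, dom a -> TE' (F (actM a m, n)) (F (m, actN a n))) ->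
  (forall m m' n, eqM m m' -> TE' (F (m, n)) (F (m', n))) ->
  forall l l', TE l l' -> TE' (flatten (map F l)) (flatten (map F l')).
Proof.
move=> FDl FDr F0 Fbal Feq l l'; elim => {l l'}.
- by move=> l; apply: te_refl.
- by move=> l l' _; apply: te_sym.
- by move=> l1 l2 l3 _ e1 _; apply: te_trans e1.
- by move=> l l' pl; apply/te_perm/perm_flatten/perm_map.
- by move=> ???? _ e1 _ e2; rewrite !map_cat !flatten_cat; apply: te_cat.
- by move=> m m' n /=; rewrite !cats0; apply: FDl.
- by move=> m n n' /=; rewrite !cats0; apply: FDr.
- by move=> n /=; rewrite cats0; apply: F0.
- by move=> a m n da /=; rewrite !cats0; apply: Fbal.
- by move=> m m' n e /=; rewrite !cats0; apply: Feq.
Qed.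

Lemma te_map (f : M * N -> M' * N') :
  (forall m m' n, TE' [:: f (m + m', n)] [:: f (m, n); f (m', n)]) ->
  (forall m n n', TE' [:: f (m, n + n')] [:: f (m, n); f (m, n')]) ->
  (forall n, TE' [:: f (0, n)] [::]) ->
  (forall a m n, dom a -> TE' [:: f (actM a m, n)] [:: f (m, actN a n)]) ->
  (forall m m' n, eqM m m' -> TE' [:: f (m, n)] [:: f (m', n)]) ->
  forall l l', TE l l' -> TE' (map f l) (map f l').
Proof.
move=> fDl fDr f0 fbal feq l l' e.
rewrite -[map f l]flatten_map1 -[map f l']flatten_map1.
exact: (te_flatten_map (F := fun x => [:: f x])) e.
Qed.

End Functoriality.

Lemma te_sub_eqM (eqM' : M -> M -> Prop) :
  (forall m m', eqM m m' -> eqM' m m') ->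
  forall l l', TE l l' -> tens_eq dom actM actN eqM' l l'.
Proof.
move=> sub l l'; elim=> {l l'}.
- exact: te_refl.
- by move=> ? ? _; apply: te_sym.
- by move=> ? ? ? _ e1 _; apply: te_trans e1.
- exact: te_perm.
- by move=> ? ? ? ? _ e1 _ e2; apply: te_cat.
- exact: te_addl.
- exact: te_addr.
- exact: te_zero.
- exact: te_bal.
- by move=> ? ? ? /sub; apply: te_eqM.
Qed.

End TensorCalculus.

Arguments te_zero_r {Sc dom M N actM actN eqM} m.
Arguments te_sumr {Sc dom M N actM actN eqM I} r F m.
Arguments te_suml {Sc dom M N actM actN eqM I} r F n.

Section Tensor3Functoriality.
Variables (A H : comNzRingType) (s t : A -> H).
Variables (Sc : Type) (dom : Sc -> Prop) (M N : zmodType)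
  (actM : Sc -> M -> M) (actN : Sc -> N -> N) (eqM : M -> M -> Prop).
Local Notation TE := (tens_eq dom actM actN eqM).

Lemma t3_map (f : H * H * H -> M * N) :
  (forall x x' y z, TE [:: f (x + x', y, z)] [:: f (x, y, z); f (x', y, z)]) ->
  (forall x y y' z, TE [:: f (x, y + y', z)] [:: f (x, y, z); f (x, y', z)]) ->
  (forall x y z z', TE [:: f (x, y, z + z')] [:: f (x, y, z); f (x, y, z')]) ->
  (forall y z, TE [:: f (0, y, z)] [::]) ->
  (forall a x y z, TE [:: f (x * t a, y, z)] [:: f (x, s a * y, z)]) ->
  (forall a x y z, TE [:: f (x, y * t a, z)] [:: f (x, y, s a * z)]) ->
  forall l l', tens3_eq s t l l' -> TE (map f l) (map f l').
Proof.
move=> fD1 fD2 fD3 f0 fbal1 fbal2 l l'; elim=> {l l'} /=.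
- by move=> l; apply: te_refl.
- by move=> l l' _; apply: te_sym.
- by move=> l1 l2 l3 _ e1 _; apply: te_trans e1.
- by move=> l l' pl; apply/te_perm/perm_map.
- by move=> ???? _ e1 _ e2; rewrite !map_cat; apply: te_cat.
- exact: fD1.
- exact: fD2.
- exact: fD3.
- exact: f0.
- exact: fbal1.
- exact: fbal2.
Qed.

End Tensor3Functoriality.

Definition tmul (R : comNzRingType) (L1 L2 : seq (R * R)) :=
  [seq (p.1 * q.1, p.2 * q.2) | p <- L1, q <- L2].

Section TensorMultiplication.
Variables (Sc : Type) (dom : Sc -> Prop) (R : comNzRingType)
  (phi psi : Sc -> R) (eqM : R -> R -> Prop).
Hypothesis eqM_mull : forall u m m', eqM m m' -> eqM (u * m) (u * m').
Local Notation TE :=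
  (tens_eq dom (fun a x => x * phi a) (fun a y => psi a * y) eqM).

Lemma te_mul_pure u v L L' : TE L L' ->
  TE [seq (u * q.1, v * q.2) | q <- L] [seq (u * q.1, v * q.2) | q <- L'].
Proof.
apply: (te_map (f := fun q => (u * q.1, v * q.2))) => /=.
- by move=> m m' n; rewrite mulrDr; apply: te_addl.
- by move=> m n n'; rewrite mulrDr; apply: te_addr.
- by move=> n; rewrite mulr0; apply: te_zero.
- by move=> a m n da; rewrite mulrA mulrCA; apply: te_bal.
- by move=> m m' n /(eqM_mull u) e; apply: te_eqM.
Qed.

Lemma tmul_wdr L1 L2 L2' : TE L2 L2' -> TE (tmul L1 L2) (tmul L1 L2').
Proof. by move=> e; apply: te_eq_flatten => p _; apply: te_mul_pure. Qed.

Lemma spanned_tmulr (P : R * R -> Prop) L1 L2 :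
  (forall u v p, P p -> P (u * p.1, v * p.2)) ->
  spanned TE P L2 -> spanned TE P (tmul L1 L2).
Proof.
move=> Pmul [l [Pl e]]; exists (tmul L1 l); split; last exact: tmul_wdr.
by move=> r /allpairsP[[p q] [_ ql ->]]; apply/Pmul/Pl.
Qed.

End TensorMultiplication.

(** * Ideals and additive quotients *)

Section IdealGen.
Variables (k : fieldType) (H : comAlgType k) (X : H -> Prop).

Lemma ideal_gen_sub y : X y -> ideal_gen X y.
Proof.
move=> Xy; exists [:: (1, y)]; split; first by move=> p /[1!inE] /eqP ->.
by rewrite big_seq1 mul1r.
Qed.

Lemma ideal_gen0 : ideal_gen X 0.
Proof. by exists [::]; rewrite big_nil. Qed.

Lemma ideal_genD x y : ideal_gen X x -> ideal_gen X y -> ideal_gen X (x + y).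
Proof.
move=> [l [Xl ->]] [l' [Xl' ->]]; exists (l ++ l'); rewrite big_cat; split=> //.
by move=> p; rewrite mem_cat => /orP[]; [apply: Xl | apply: Xl'].
Qed.

Lemma ideal_genM h x : ideal_gen X x -> ideal_gen X (h * x).
Proof.
move=> [l [Xl ->]]; exists [seq (h * p.1, p.2) | p <- l]; split.
  by move=> q /mapP[p pl ->]; exact: Xl pl.
by rewrite big_map big_distrr; apply: eq_bigr => p _ /=; rewrite mulrA.
Qed.

Lemma ideal_gen_sum (I : eqType) (r : seq I) (F : I -> H) :
  {in r, forall i, ideal_gen X (F i)} -> ideal_gen X (\sum_(i <- r) F i).
Proof.
elim: r => [|i r IH] XF; first by rewrite big_nil; apply: ideal_gen0.
rewrite big_cons; apply: ideal_genD; first exact: XF (mem_head _ _).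
by apply: IH => j jr; apply: XF; rewrite inE jr orbT.
Qed.

Lemma ideal_gen_is_ideal : is_ideal (ideal_gen X).
Proof. by split; [apply: ideal_gen0 | apply: ideal_genD | apply: ideal_genM]. Qed.

End IdealGen.

Section AdditiveQuotient.
Variables (V : zmodType) (P : V -> Prop).
Hypotheses (P0 : P 0) (PB : forall x y, P x -> P y -> P (x - y)).

Definition predb : {pred V} := fun x => is_left (excluded_middle_informative (P x)).

Lemma predbP x : x \in predb <-> P x.
Proof. by rewrite unfold_in /predb; case: excluded_middle_informative. Qed.

Lemma predb_zmod_closed : zmod_closed predb.
Proof.
by split=> [|x y /predbP Px /predbP Py]; apply/predbP; [apply: P0 | apply: PB].
Qed.

HB.instance Definition _ := GRing.isZmodClosed.Build V predb predb_zmod_closed.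

Definition quot_by := Quotient.quot predb.
Definition pi_by : V -> quot_by := \pi_quot_by%qT.

Lemma pi_by_eq x y : pi_by x = pi_by y <-> P (x - y).
Proof. by rewrite -predbP Quotient.idealrBE; split=> /eqP. Qed.

Lemma pi_byD x y : pi_by (x + y) = pi_by x + pi_by y.
Proof. exact: raddfD. Qed.

Lemma pi_by0 : pi_by 0 = 0.
Proof. exact: raddf0. Qed.

Lemma pi_by_sum I (r : seq I) F :
  pi_by (\sum_(i <- r) F i) = \sum_(i <- r) pi_by (F i).
Proof. exact: raddf_sum. Qed.

Lemma pi_by_repr q : pi_by (repr q) = q.
Proof. exact: reprK. Qed.

End AdditiveQuotient.

(** * Hopf algebroids *)

Section HopfAlgebroidFacts.
Variables (k : fieldType) (A H : comAlgType k) (s t : {lrmorphism A -> H})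
  (eps : {lrmorphism H -> A}) (Delta : H -> seq (H * H))
  (S : {lrmorphism H -> H}).
Hypothesis HA : hopf_algebroid s t eps Delta S.
Local Notation HT := (hteq s t).

Lemma DeltaD x y : HT (Delta (x + y)) (Delta x ++ Delta y).
Proof. by case: HA => [[h _] _]; apply: h. Qed.
Lemma DeltaZ c x : HT (Delta (c *: x)) [seq (c *: p.1, p.2) | p <- Delta x].
Proof. by case: HA => [[_ [h _]] _]; apply: h. Qed.
Lemma Delta1 : HT (Delta 1) [:: (1, 1)].
Proof. by case: HA => [[_ [_ [h _]]] _]. Qed.
Lemma DeltaM x y : HT (Delta (x * y)) (tmul (Delta x) (Delta y)).
Proof. by case: HA => [[_ [_ [_ h]]] _]; apply: h. Qed.
Lemma DeltaMt a x : HT (Delta (x * t a)) [seq (p.1, p.2 * t a) | p <- Delta x].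
Proof. by case: HA => [_ [[_ [h _]] _]]; apply: h. Qed.
Lemma eps_s a : eps (s a) = a.
Proof. by case: HA => [_ [[_ [_ [h _]]] _]]; apply: h. Qed.
Lemma eps_t a : eps (t a) = a.
Proof. by case: HA => [_ [[_ [_ [_ [h _]]]] _]]; apply: h. Qed.
Lemma coassoc x : tens3_eq s t
  [seq (q.1, q.2, p.2) | p <- Delta x, q <- Delta p.1]
  [seq (p.1, q.1, q.2) | p <- Delta x, q <- Delta p.2].
Proof. by case: HA => [_ [[_ [_ [_ [_ [h _]]]]] _]]; apply: h. Qed.
Lemma counitL x : \sum_(p <- Delta x) s (eps p.1) * p.2 = x.
Proof. by case: HA => [_ [[_ [_ [_ [_ [_ [h _]]]]]] _]]; apply: h. Qed.
Lemma counitR x : \sum_(p <- Delta x) p.1 * t (eps p.2) = x.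
Proof. by case: HA => [_ [[_ [_ [_ [_ [_ [_ h]]]]]] _]]; apply: h. Qed.
Lemma S_s a : S (s a) = t a.
Proof. by case: HA => [_ [_ [h _]]]; apply: h. Qed.
Lemma S_t a : S (t a) = s a.
Proof. by case: HA => [_ [_ [_ [h _]]]]; apply: h. Qed.
Lemma antipodeL x : \sum_(p <- Delta x) S p.1 * p.2 = t (eps x).
Proof. by case: HA => [_ [_ [_ [_ [_ [h _]]]]]]; apply: h. Qed.
Lemma antipodeR x : \sum_(p <- Delta x) p.1 * S p.2 = s (eps x).
Proof. by case: HA => [_ [_ [_ [_ [_ [_ h]]]]]]; apply: h. Qed.

Lemma eps_S x : eps (S x) = eps x.
Proof.
rewrite -{1}(counitR x) !rmorph_sum /=.
under eq_bigr do rewrite !rmorphM /= S_t eps_s.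
rewrite -[RHS](eps_t (eps x)) -antipodeL rmorph_sum.
by apply: eq_bigr => p _; rewrite rmorphM.
Qed.

Lemma HTbal a x y : HT [:: (x * t a, y)] [:: (x, s a * y)].
Proof. exact: te_bal. Qed.

Lemma HT_tmulr L1 L2 L2' : HT L2 L2' -> HT (tmul L1 L2) (tmul L1 L2').
Proof. by apply: tmul_wdr => u m m' ->. Qed.

Lemma Delta0 : HT (Delta 0) [::].
Proof.
have := DeltaZ 0 0; rewrite scale0r => e; apply: te_trans e (te_map_nil _) => p _.
by rewrite scale0r; apply: te_zero.
Qed.

Lemma Delta_sum (J : Type) (r : seq J) (F : J -> H) :
  HT (Delta (\sum_(j <- r) F j)) (flatten (map (fun j => Delta (F j)) r)).
Proof.
elim: r => [|j r IH]; first by rewrite big_nil; apply: Delta0.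
by rewrite big_cons; apply: te_trans (DeltaD _ _) (te_catl _ IH).
Qed.

Section Representatives.
Variables (x : H) (L : seq (H * H)).
Hypothesis LDelta : HT L (Delta x).

Lemma rep_counitL : \sum_(v <- L) s (eps v.1) * v.2 = x.
Proof.
rewrite -[RHS]counitL.
rewrite (te_balanced_sum (f := fun m n : H => s (eps m) * n) _ _ _ _ LDelta) //.
- by move=> m m' n; rewrite !rmorphD mulrDl.
- by move=> m n n'; rewrite mulrDr.
- by move=> a m n _; rewrite !rmorphM /= eps_t mulrA.
- by move=> m m' n ->.
Qed.

Lemma rep_counitR : \sum_(v <- L) v.1 * t (eps v.2) = x.
Proof.
rewrite -[RHS]counitR.
rewrite (te_balanced_sum (f := fun m n : H => m * t (eps n)) _ _ _ _ LDelta) //.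
- by move=> m m' n; rewrite mulrDl.
- by move=> m n n'; rewrite !rmorphD mulrDr.
- by move=> a m n _; rewrite !rmorphM /= eps_s mulrA.
- by move=> m m' n ->.
Qed.

Lemma rep_antipodeL : \sum_(v <- L) S v.1 * v.2 = t (eps x).
Proof.
rewrite -antipodeL (te_balanced_sum (f := fun m n : H => S m * n) _ _ _ _ LDelta) //.
- by move=> m m' n; rewrite rmorphD mulrDl.
- by move=> m n n'; rewrite mulrDr.
- by move=> a m n _; rewrite rmorphM /= S_t mulrA.
- by move=> m m' n ->.
Qed.

Lemma rep_antipodeR : \sum_(v <- L) v.1 * S v.2 = s (eps x).
Proof.
rewrite -antipodeR (te_balanced_sum (f := fun m n : H => m * S n) _ _ _ _ LDelta) //.
- by move=> m m' n; rewrite mulrDl.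
- by move=> m n n'; rewrite rmorphD mulrDr.
- by move=> a m n _; rewrite rmorphM /= S_s mulrA.
- by move=> m m' n ->.
Qed.

End Representatives.

(** * Normality of H K^+ *)

Local Notation BT := (barteq s t).

Lemma BTbal a x y : BT [:: (x * s a, y)] [:: (x, s a * y)].
Proof. exact: te_bal. Qed.

Lemma barteq_eqM_mull u m m' : st_ideal s t (m - m') -> st_ideal s t (u * m - u * m').
Proof. by rewrite -mulrBr; apply: ideal_genM. Qed.

Lemma BT_t_s a x y : BT [:: (x * t a, y)] [:: (x * s a, y)].
Proof.
apply: te_eqM; rewrite -mulrBr -opprB mulrN -mulNr.
by apply: ideal_genM; apply: ideal_gen_sub; exists a.
Qed.

Definition coad1 (p : H * H) := [seq (q.2, S q.1 * p.2) | q <- Delta p.1].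
Definition coad (L : seq (H * H)) := flatten (map coad1 L).

Lemma coad_wd_Delta w L L' : HT L L' ->
  BT [seq (q.2, S q.1 * w) | q <- L] [seq (q.2, S q.1 * w) | q <- L'].
Proof.
apply: (te_map (f := fun q : H * H => (q.2, S q.1 * w))) => /=.
- by move=> m m' n; rewrite rmorphD mulrDl; apply: te_addr.
- by move=> m n n'; apply: te_addl.
- by move=> n; rewrite rmorph0 mul0r; apply: te_zero_r.
- move=> a m n _; rewrite rmorphM /= S_t -mulrA mulrCA [s a * n]mulrC.
  by apply: te_sym; apply: BTbal.
- by move=> m m' n ->; apply: te_refl.
Qed.

Lemma coad_wd L L' : HT L L' -> BT (coad L) (coad L').
Proof.
apply: (te_flatten_map (F := coad1)) => /=.
- by move=> m m' n; rewrite /coad1 -map_cat; apply/coad_wd_Delta/DeltaD.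
- by move=> m n n'; apply: te_map_split => q; rewrite mulrDr; apply: te_addr.
- by move=> n; apply: coad_wd_Delta Delta0.
- move=> a m n _; apply: te_trans (coad_wd_Delta _ (DeltaMt a m)) _.
  rewrite -map_comp; apply: te_eq_map => q _ /=.
  by apply: te_trans (BT_t_s _ _ _) _; rewrite mulrCA; apply: BTbal.
- by move=> m m' n ->; apply: te_refl.
Qed.

Lemma coad_tmul L1 L2 : BT (coad (tmul L1 L2)) (tmul (coad L1) (coad L2)).
Proof.
pose W (p q u v : H * H) := (u.2 * v.2, S u.1 * p.2 * (S v.1 * q.2)).
have -> : coad (tmul L1 L2) =
    flatten [seq flatten [seq coad1 (p.1 * q.1, p.2 * q.2) | q <- L2] | p <- L1].
  by rewrite /coad flatten_map_flatten -map_comp; congr flatten;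
     apply: eq_map => p /=; rewrite -map_comp.
have -> : tmul (coad L1) (coad L2) = flatten [seq flatten [seq flatten
    [seq [seq W p q u v | v <- Delta q.1] | q <- L2] | u <- Delta p.1] | p <- L1].
  rewrite /tmul /coad flatten_map_flatten -map_comp; congr flatten.
  apply: eq_map => p /=; rewrite /coad1 -map_comp; congr flatten.
  apply: eq_map => u /=; rewrite map_flatten -map_comp; congr flatten.
  by apply: eq_map => q /=; rewrite -map_comp.
apply: te_eq_flatten => p _.
pose Y q u := [seq W p q u v | v <- Delta q.1].
apply: te_trans
  (_ : BT _ (flatten [seq flatten [seq Y q u | u <- Delta p.1] | q <- L2]))
  (te_perm _ _ (perm_flatten_swap _ _ _)).
apply: te_eq_flatten => q _; apply: te_trans (coad_wd_Delta _ (DeltaM _ _)) _.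
rewrite map_flatten -map_comp; apply: te_eq_flatten => u _.
rewrite /= -map_comp; apply: te_eq_map => v _.
by rewrite /W /= rmorphM mulrACA; apply: te_refl.
Qed.

Section SubHopfAlgebroid.
Variable K : H -> Prop.
Hypothesis HK : sub_hopf_algebroid s t Delta S K.
Local Notation I := (HKplus eps K).

Lemma Ks a : K (s a).
Proof. by have [h _ _ _ _] := HK; case: (h a). Qed.
Lemma Kt a : K (t a).
Proof. by have [h _ _ _ _] := HK; case: (h a). Qed.
Lemma KD x y : K x -> K y -> K (x + y).
Proof. by have [_ h _ _ _] := HK; apply: h. Qed.
Lemma KB x y : K x -> K y -> K (x - y).
Proof. by have [_ hD hN _ _] := HK => Kx Ky; apply/hD/hN. Qed.
Lemma KM x y : K x -> K y -> K (x * y).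
Proof. by have [_ _ _ h _] := HK; apply: h. Qed.
Lemma KS x : K x -> K (S x).
Proof. by have [_ _ _ _ [_ h _]] := HK; apply: h. Qed.
Lemma KDelta x : K x ->
  exists L, (forall p, p \in L -> K p.1 /\ K p.2) /\ HT L (Delta x).
Proof. by have [_ _ _ _ [_ _ h]] := HK; apply: h. Qed.
Lemma K0 : K 0.
Proof. by have := Ks 0; rewrite rmorph0. Qed.
Lemma K1 : K 1.
Proof. by have := Ks 1; rewrite rmorph1. Qed.

Lemma HKplus_gen y : K y -> eps y = 0 -> I y.
Proof. by move=> Ky ey; apply: ideal_gen_sub. Qed.

Lemma HKplus_sub_s_eps y : K y -> I (y - s (eps y)).
Proof.
by move=> Ky; apply: HKplus_gen; [apply: KB Ky (Ks _) | rewrite rmorphB /= eps_s subrr].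
Qed.

Lemma HKplus_eps x : I x -> eps x = 0.
Proof.
move=> [l [lK ->]]; rewrite rmorph_sum big_seq big1 // => p pl.
by rewrite rmorphM /= (lK p pl).2 mulr0.
Qed.

Lemma HKplus_S x : I x -> I (S x).
Proof.
move=> [l [lK ->]]; rewrite rmorph_sum; apply: ideal_gen_sum => p pl.
have [Kp ep] := lK p pl; rewrite rmorphM; apply: ideal_genM.
by apply: HKplus_gen; [apply: KS | rewrite eps_S].
Qed.

Lemma st_ideal_sub_HKplus x : st_ideal s t x -> I x.
Proof.
move=> [l [lst ->]]; exists l; split=> // p pl; have [a ->] := lst p pl.
by split; [apply: KB (Ks a) (Kt a) | rewrite rmorphB /= eps_s eps_t subrr].
Qed.

Lemma Delta_Kplus y : K y -> eps y = 0 ->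
  spanned HT (fun p => I p.1 \/ I p.2) (Delta y).
Proof.
move=> Ky ey; have [L [LK LDelta]] := KDelta Ky.
exists ([seq (v.1, v.2 - s (eps v.2)) | v <- L] ++ [:: (y, 1)]); split.
  move=> p; rewrite mem_cat => /orP[/mapP[v vL ->] | /[1!inE] /eqP ->].
    by right; apply: HKplus_sub_s_eps (LK v vL).2.
  by left; apply: HKplus_gen.
have counit : HT [:: (y, 1)] [seq (v.1, s (eps v.2)) | v <- L].
  rewrite -{1}(rep_counitR LDelta); apply: te_trans (te_suml _ _ _) _.
  by apply: te_eq_map => v _; rewrite -[s _]mulr1; apply: HTbal.
apply: te_trans (te_catl _ counit) _; apply: te_trans _ LDelta.
apply: te_sym; rewrite -{1}[L]map_id; apply: te_map_split => -[v1 v2] /=.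
by rewrite -{1}(subrK (s (eps v2)) v2); apply: te_addr.
Qed.

Lemma Delta_HKplus x : I x -> spanned HT (fun p => I p.1 \/ I p.2) (Delta x).
Proof.
move=> [l [lK ->]]; apply: spanned_te (te_sym (Delta_sum _ _)).
apply: spanned_flatten => p /lK[Kp ep]; apply: spanned_te (te_sym (DeltaM _ _)).
apply: spanned_tmulr (Delta_Kplus Kp ep) => [u m m' -> //|u v q].
by case=> Iq; [left | right]; apply: ideal_genM.
Qed.

Lemma HKplus_hopf_ideal : hopf_ideal s t eps Delta S I.
Proof.
split; [exact: ideal_gen_is_ideal | exact: HKplus_eps | exact: Delta_HKplus |].
exact: HKplus_S.
Qed.

Lemma coad1_K q : K q.1 -> exists2 D, (forall p, p \in D -> I p.1) &
  BT (coad1 q) (D ++ [:: (1, S q.1 * q.2)]).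
Proof.
move=> Kq; have [L [LK LDelta]] := KDelta Kq.
exists [seq (v.2 - s (eps v.2), S v.1 * q.2) | v <- L].
  by move=> _ /mapP[v vL ->]; apply: HKplus_sub_s_eps (LK v vL).2.
apply: te_trans (coad_wd_Delta _ (te_sym LDelta)) _.
apply: te_trans (te_map_split (g' := fun v => (s (eps v.2), S v.1 * q.2)) _ _) _.
  by move=> v; rewrite -{1}(subrK (s (eps v.2)) v.2); apply: te_addl.
apply: te_catl.
apply: te_trans (_ : BT _ [seq (1, s (eps v.2) * (S v.1 * q.2)) | v <- L]) _.
  by apply: te_eq_map => v _; rewrite -{1}[s _]mul1r; apply: BTbal.
apply: te_trans (te_sym (te_sumr _ _ _)) _.
have -> : \sum_(v <- L) s (eps v.2) * (S v.1 * q.2) = S q.1 * q.2.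
  rewrite -(rep_counitR LDelta) rmorph_sum big_distrl /=.
  by apply: eq_bigr => v _; rewrite rmorphM /= S_t mulrCA mulrA.
exact: te_refl.
Qed.

Lemma coad_Kplus y : K y -> eps y = 0 ->
  spanned BT (fun p => I p.1) (coad (Delta y)).
Proof.
move=> Ky ey; have [L [LK LDelta]] := KDelta Ky.
have [D ID e] := te_flatten_mod (fun q qL => coad1_K (LK q qL).1).
exists D; split=> //; apply: te_sym; apply: te_trans (coad_wd (te_sym LDelta)) _.
apply: te_trans e _; rewrite (rep_antipodeL LDelta) ey rmorph0 -{2}[D]cats0.
exact/te_catl/te_zero_r.
Qed.

Lemma coad_HKplus x : I x -> spanned BT (fun p => I p.1) (coad (Delta x)).
Proof.
move=> [l [lK ->]]; apply: spanned_te (coad_wd (te_sym (Delta_sum _ _))).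
rewrite /coad flatten_map_flatten -map_comp; apply: spanned_flatten => p /lK[Kp ep].
apply: spanned_te (coad_wd (te_sym (DeltaM _ _))).
apply: spanned_te (te_sym (coad_tmul _ _)).
apply: spanned_tmulr (coad_Kplus Kp ep) => [|u v q]; first exact: barteq_eqM_mull.
exact: ideal_genM.
Qed.

Lemma HKplus_normal : normal_hopf_ideal s t eps Delta S I.
Proof.
split; [exact: HKplus_hopf_ideal | exact: st_ideal_sub_HKplus |].
exact: coad_HKplus.
Qed.

(** * Coinvariants of H / H K^+ *)

Local Notation CT := (tens_eq (fun _ : A => True) (fun a (y : H) => y * t a)
  (fun a (z : H) => s a * z) (fun y z => I (y - z))).

Lemma K_coinv x : K x -> coinv s t Delta I x.
Proof.
move=> Kx; have [L [LK LDelta]] := KDelta Kx.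
have HT_CT l l' : HT l l' -> CT l l'.
  by apply: te_sub_eqM => m m' ->; rewrite subrr; apply: ideal_gen0.
apply: te_trans (HT_CT _ _ (te_sym LDelta)) _.
rewrite -[L]map_id; apply: te_trans (te_map_split
  (g := fun v => (v.1 - s (eps v.1), v.2)) (g' := fun v => (s (eps v.1), v.2)) _ _) _.
  by move=> [v1 v2]; rewrite -{1}(subrK (s (eps v1)) v1); apply: te_addl.
rewrite -[[:: (1, x)]]cat0s; apply: te_cat.
  apply: te_map_nil => v vL; apply: te_trans _ (te_zero v.2).
  by apply: te_eqM; rewrite subr0; apply: HKplus_sub_s_eps (LK v vL).1.
apply: te_trans (_ : CT _ [seq (1, s (eps v.1) * v.2) | v <- L]) _.
  apply: te_eq_map => v _; apply: te_trans (_ : CT _ [:: (1 * t (eps v.1), v.2)]) _.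
    apply: te_eqM; rewrite mul1r.
    by apply/st_ideal_sub_HKplus/ideal_gen_sub; exists (eps v.1).
  exact: te_bal.
by rewrite -(rep_counitL LDelta); apply: te_sym; apply: te_sumr.
Qed.

Section Purity.
Hypothesis HP : pure_over K.

Local Notation HmodK := (quot_by K0 KB).
Local Notation pi := (pi_by K0 KB).

Definition actK (b : H) (q : HmodK) : HmodK := pi (b * repr q).
Local Notation PT := (tens_eq K actK (fun b (h : H) => b * h) (@eq HmodK)).

Lemma pi_K x : K x -> pi x = 0.
Proof.
by move=> Kx; rewrite -(pi_by0 K0 KB); apply/(pi_by_eq K0 KB); rewrite subr0.
Qed.

Lemma actK_pi b m : K b -> actK b (pi m) = pi (b * m).
Proof.
move=> Kb; apply/(pi_by_eq K0 KB); rewrite -mulrBr; apply: KM => //.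
by apply/(pi_by_eq K0 KB); rewrite pi_by_repr.
Qed.

Lemma actK_module : module_over K actK.
Proof.
split=> [b q q' Kb | b b' q Kb Kb' | b b' q Kb Kb' | q].
- by rewrite -[q]pi_by_repr -[q']pi_by_repr -pi_byD !actK_pi // mulrDr pi_byD.
- by rewrite -[q]pi_by_repr !actK_pi ?mulrDl ?pi_byD //; apply: KD.
- by rewrite -[q]pi_by_repr !actK_pi ?mulrA //; apply: KM.
- by rewrite -[q]pi_by_repr actK_pi ?mul1r //; apply: K1.
Qed.

Lemma PTbal b m n : K b -> PT [:: (pi (m * b), n)] [:: (pi m, b * n)].
Proof. by move=> Kb; rewrite mulrC -actK_pi //; apply: te_bal. Qed.

Lemma pi_S_wd w L L' : HT L L' ->
  PT [seq (pi q.1, S q.2 * w) | q <- L] [seq (pi q.1, S q.2 * w) | q <- L'].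
Proof.
apply: (te_map (f := fun q : H * H => (pi q.1, S q.2 * w))) => /=.
- by move=> m m' n; rewrite pi_byD; apply: te_addl.
- by move=> m n n'; rewrite rmorphD mulrDl; apply: te_addr.
- by move=> n; rewrite pi_by0; apply: te_zero.
- by move=> a m n _; rewrite rmorphM /= S_s -mulrA; apply/PTbal/Kt.
- by move=> m m' n ->; apply: te_refl.
Qed.

Definition gal1 (p : H * H) := [seq (pi q.1, S q.2 * p.2) | q <- Delta p.1].
Definition gal (L : seq (H * H)) := flatten (map gal1 L).

Lemma gal1_Kplus u n y L : HT L (Delta y) -> {in L, forall v, K v.1} ->
  eps y = 0 -> PT [seq (pi (u.1 * v.1), S (u.2 * v.2) * n) | v <- L] [::].
Proof.
move=> LDelta LK ey.
apply: te_trans (_ : PT _ [seq (pi u.1, v.1 * S v.2 * (S u.2 * n)) | v <- L]) _.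
  apply: te_eq_map => v vL.
  have -> : v.1 * S v.2 * (S u.2 * n) = v.1 * (S (u.2 * v.2) * n).
    by rewrite rmorphM /=; ring.
  by apply: PTbal; apply: LK.
apply: te_trans (te_sym (te_sumr _ _ _)) _.
by rewrite -big_distrl /= (rep_antipodeR LDelta) ey rmorph0 mul0r; apply: te_zero_r.
Qed.

Lemma gal1_HKplus g n : I g -> PT (gal1 (g, n)) [::].
Proof.
move=> [l [lK ->]]; rewrite /gal1 /=.
apply: te_trans (pi_S_wd n (Delta_sum l _)) _.
rewrite map_flatten -map_comp; apply: te_flatten_nil => p /lK[Kp ep] /=.
have [L [LK LDelta]] := KDelta Kp.
apply: te_trans (pi_S_wd n (DeltaM _ _)) _.
apply: te_trans (pi_S_wd n (HT_tmulr (Delta p.1) (te_sym LDelta))) _.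
rewrite map_flatten -map_comp; apply: te_flatten_nil => u _ /=; rewrite -map_comp.
by apply: gal1_Kplus LDelta _ ep => v vL; case: (LK v vL).
Qed.

Lemma gal1D m m' n : PT (gal1 (m + m', n)) (gal1 (m, n) ++ gal1 (m', n)).
Proof. by rewrite /gal1 /= -map_cat; apply/pi_S_wd/DeltaD. Qed.

Lemma gal_wd l l' : CT l l' -> PT (gal l) (gal l').
Proof.
apply: (te_flatten_map (F := gal1)) => /=.
- exact: gal1D.
- by move=> m n n'; apply: te_map_split => q; rewrite mulrDr; apply: te_addr.
- by move=> n; apply: pi_S_wd Delta0.
- move=> a m n _; apply: te_trans (pi_S_wd _ (DeltaMt a m)) _.
  rewrite -map_comp; apply: te_eq_map => q _ /=.
  by rewrite rmorphM /= S_t -mulrA; apply: te_refl.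
- move=> m m' n Im; apply: te_trans (_ : PT _ (gal1 (m - m', n) ++ gal1 (m', n))) _.
    by rewrite -{1}(subrK m' m); apply: gal1D.
  by rewrite -[gal1 (m', n)]cat0s; apply/te_catr/gal1_HKplus.
Qed.

Lemma gal_Delta_coassoc x : PT (gal (Delta x))
  (flatten [seq [seq (pi p.1, S q.1 * q.2) | q <- Delta p.2] | p <- Delta x]).
Proof.
pose f (r : H * H * H) := (pi r.1.1, S r.1.2 * r.2).
have -> : gal (Delta x) = map f [seq (q.1, q.2, p.2) | p <- Delta x, q <- Delta p.1].
  rewrite map_flatten -map_comp; congr flatten.
  by apply: eq_map => p /=; rewrite -map_comp.
have -> : flatten [seq [seq (pi p.1, S q.1 * q.2) | q <- Delta p.2] | p <- Delta x]
    = map f [seq (p.1, q.1, q.2) | p <- Delta x, q <- Delta p.2].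
  rewrite map_flatten -map_comp; congr flatten.
  by apply: eq_map => p /=; rewrite -map_comp.
apply: (t3_map _ _ _ _ _ _ (coassoc x)); rewrite /f /=.
- by move=> a a' b c; rewrite pi_byD; apply: te_addl.
- by move=> a b b' c; rewrite rmorphD mulrDl; apply: te_addr.
- by move=> a b c c'; rewrite mulrDr; apply: te_addr.
- by move=> b c; rewrite pi_by0; apply: te_zero.
- by move=> a a' b c; rewrite rmorphM /= S_s -mulrA; apply/PTbal/Kt.
- by move=> a a' b c; rewrite rmorphM /= S_t -mulrA; apply: te_refl.
Qed.

Lemma gal_Delta x : PT (gal (Delta x)) [:: (pi x, 1)].
Proof.
apply: te_trans (gal_Delta_coassoc x) _.
apply: te_trans (_ : PT _ [seq (pi p.1, t (eps p.2)) | p <- Delta x]) _.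
  rewrite -[[seq (pi p.1, t (eps p.2)) | p <- Delta x]]flatten_map1.
  apply: te_eq_flatten => p _.
  by rewrite -antipodeL; apply: te_sym; apply: te_sumr.
apply: te_trans (_ : PT _ [seq (pi (p.1 * t (eps p.2)), 1) | p <- Delta x]) _.
  apply: te_eq_map => p _; apply: te_sym.
  by rewrite -{2}[t _]mulr1; apply/PTbal/Kt.
apply: te_trans (te_sym (te_suml _ _ _)) _.
by rewrite -pi_by_sum counitR; apply: te_refl.
Qed.

Lemma coinv_K x : coinv s t Delta I x -> K x.
Proof.
move=> xco; have : PT [:: (pi x, 1)] [:: (0, 1)].
  apply: te_trans (te_sym (gal_Delta x)) _; apply: te_trans (gal_wd xco) _.
  rewrite /gal /= cats0 /gal1 /=; apply: te_trans (pi_S_wd _ Delta1) _.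
  by rewrite /= (pi_K K1); apply: te_trans (te_zero _) (te_sym (te_zero _)).
move/(HP actK_module); rewrite -(pi_by0 K0 KB) => /(pi_by_eq K0 KB).
by rewrite subr0.
Qed.

Lemma coinv_HKplus : coinv s t Delta I = K.
Proof.
apply: functional_extensionality => x; apply: propositional_extensionality.
by split; [apply: coinv_K | apply: K_coinv].
Qed.

End Purity.
End SubHopfAlgebroid.
End HopfAlgebroidFacts.

Unset Implicit Arguments.

Theorem proposition3p26 (k : fieldType) (A H : comAlgType k)
  (s t : {lrmorphism A -> H}) (eps : {lrmorphism H -> A})
  (Delta : H -> seq (H * H)) (S : {lrmorphism H -> H}) (K : H -> Prop) :
  hopf_algebroid s t eps Delta S ->
  flat_via_s s ->
  sub_hopf_algebroid s t Delta S K ->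
  pure_over K ->
  normal_hopf_ideal s t eps Delta S (HKplus eps K) /\
  pure_over (coinv s t Delta (HKplus eps K)).
Proof.
move=> HA _ HK HP; split; first exact: (HKplus_normal HA HK).
by rewrite (coinv_HKplus HA HK HP).
Qed.
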